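(* Let $x_s<x_t$ be integers, let $C\ge 0$, and let $f:[x_s,x_t]\to\mathbb{R}$ be such that $([x_s,x_t],f)$ is an Ameso($C$) pair. Suppose there exist $x^0\in[x_s,x_t]$ and a positive integer $b$ with $[x^0,x^0+b]\subseteq[x_s,x_t]$ such that (a) $f(x^0)=\min_{y\in[x^0,x^0+b]}f(y)$ and (b) $f(x^0)+C\le\max_{y\in[x^0,x^0+b]}f(y)$. Let $z$ be the largest element of $[x^0,x^0+b]$ at which $f$ attains $\max_{y\in[x^0,x^0+b]}f(y)$. Then $x^0+\frac b2<z\le x^0+b$.
   Context: For integers $a\le b$, $[a,b]$ denotes the set of integers $\{a,a+1,\dots,b\}$. Floors and ceilings of vectors are taken componentwise. A set $D^n\subseteq\mathbb{Z}^n$ is an Ameso set if $\lceil(\vec x+\vec y)/2\rceil,\lfloor(\vec x+\vec y)/2\rfloor\in D^n$ for all $\vec x,\vec y\in D^n$. For $C\ge 0$, $(D^n,f)$ is an Ameso($C$) pair if $D^n$ is an Ameso set, $f:D^n\to\mathbb{R}$ is bounded below, and $f(\vec x)+f(\vec y)+C\ge f(\lceil(\vec x+\vec y)/2\rceil)+f(\lfloor(\vec x+\vec y)/2\rfloor)$ for all $\vec x,\vec y\in D^n$. *)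

From Stdlib Require Import ZArith Reals.
Open Scope R_scope.
Open Scope Z_scope.

Definition mid_floor (x y : Z) : Z := Z.div (x + y) 2.
Definition mid_ceil (x y : Z) : Z := - Z.div (- (x + y)) 2.

Definition in_zint (a b x : Z) : Prop := a <= x <= b.

(* ([a,b], f) is an Ameso(C) pair (the interval [a,b] is an Ameso set;
   f is real-valued on a finite set hence bounded below). *)
Definition ameso_pair (a b : Z) (C : R) (f : Z -> R) : Prop :=
  forall x y, in_zint a b x -> in_zint a b y ->
    (f (mid_ceil x y) + f (mid_floor x y) <= f x + f y + C)%R.

(* Suppose z <= x0 + b/2 and reflect x0 through z: the point y = 2z - x0 still
   lies in [x0, x0 + b] and has z as its exact midpoint, so the Ameso inequality
   gives 2 f(z) <= f(x0) + f(y) + C <= f(z) + f(y).  Hence y is a maximizer too,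
   and y <= z forces z = x0.  But then the minimum and the maximum of f on
   [x0, x0 + b] coincide, so x0 + b is a maximizer beyond z, which is absurd. *)

From Stdlib Require Import ZArith Reals Lia Lra.
Open Scope R_scope.
Open Scope Z_scope.

Lemma mid_floor_reflect (x z : Z) : mid_floor x (2 * z - x) = z.
Proof.
  unfold mid_floor.
  replace (x + (2 * z - x)) with (z * 2) by ring.
  apply Z.div_mul; lia.
Qed.

Lemma mid_ceil_reflect (x z : Z) : mid_ceil x (2 * z - x) = z.
Proof.
  unfold mid_ceil.
  replace (- (x + (2 * z - x))) with (- z * 2) by ring.
  rewrite Z.div_mul; lia.
Qed.

Lemma ameso_pair_reflect {a b : Z} {C : R} {f : Z -> R} {x : Z} (z : Z) :
  ameso_pair a b C f -> in_zint a b x -> in_zint a b (2 * z - x) ->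
  (2 * f z <= f x + f (2 * z - x)%Z + C)%R.
Proof.
  intros Hameso Hx Hy.
  pose proof (Hameso x (2 * z - x) Hx Hy) as Hmid.
  rewrite mid_floor_reflect, mid_ceil_reflect in Hmid.
  lra.
Qed.

Lemma ameso_pair_reflect_maximizer {a b : Z} {C : R} {f : Z -> R} {x z : Z} :
  ameso_pair a b C f -> in_zint a b x -> in_zint a b (2 * z - x) ->
  (f x + C <= f z)%R -> (f (2 * z - x)%Z <= f z)%R ->
  f (2 * z - x) = f z.
Proof.
  intros Hameso Hx Hy Hgap Hle.
  pose proof (ameso_pair_reflect z Hameso Hx Hy).
  lra.
Qed.

Theorem lemma2 (xs xt : Z) (C : R) (f : Z -> R) (x0 b z : Z) (M : R) :
  (xs < xt)%Z ->
  (0 <= C)%R ->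
  ameso_pair xs xt C f ->
  in_zint xs xt x0 ->
  (0 < b)%Z ->
  (forall y, in_zint x0 (x0 + b)%Z y -> in_zint xs xt y) ->
  (* (a) f x0 is the minimum of f on [x0, x0+b] *)
  (forall y, in_zint x0 (x0 + b)%Z y -> (f x0 <= f y)%R) ->
  (* M is the maximum of f on [x0, x0+b] *)
  (exists y, in_zint x0 (x0 + b)%Z y /\ f y = M) ->
  (forall y, in_zint x0 (x0 + b)%Z y -> (f y <= M)%R) ->
  (* (b) *)
  (f x0 + C <= M)%R ->
  (* z is the largest maximizer on [x0, x0+b] *)
  in_zint x0 (x0 + b)%Z z -> f z = M ->
  (forall y, in_zint x0 (x0 + b)%Z y -> f y = M -> (y <= z)%Z) ->
  (2 * x0 + b < 2 * z /\ z <= x0 + b)%Z.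
Proof.
  intros _ _ Hameso _ Hb Hsub Hmin _ Hmax Hgap Hz HfzM Hlast.
  unfold in_zint in Hz.
  split; [| lia].
  destruct (Z_lt_le_dec (2 * x0 + b) (2 * z)) as [Hright | Hleft]; [exact Hright | exfalso].
  assert (Hy : in_zint x0 (x0 + b) (2 * z - x0)) by (unfold in_zint; lia).
  assert (Hx0_in : in_zint x0 (x0 + b) x0) by (unfold in_zint; lia).
  assert (HfyM : f (2 * z - x0) = M).
  { rewrite <- HfzM.
    apply (ameso_pair_reflect_maximizer Hameso (Hsub _ Hx0_in) (Hsub _ Hy)).
    - lra.
    - rewrite HfzM; exact (Hmax _ Hy). }
  assert (Hzx0 : z = x0) by (pose proof (Hlast _ Hy HfyM); lia).
  subst z.
  assert (Hend : in_zint x0 (x0 + b) (x0 + b)) by (unfold in_zint; lia).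
  assert (HfendM : f (x0 + b) = M) by (pose proof (Hmin _ Hend); pose proof (Hmax _ Hend); lra).
  pose proof (Hlast _ Hend HfendM); lia.
Qed.
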